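(* Let $Q=(V,T,U,D,s,R)$ be a left-extended queue grammar. Then there exists a context-free grammar $G=(\overline V,T,P,S)$ with $\{0,1,\#\}\subseteq \overline V$ such that $L(Q)=L(G,F)$, where $F=\{w\#w^R\mid w\in\{0,1\}^*\}$ and the finalizing alphabet is $W=\{0,1,\#\}$.
   Context: A left-extended queue grammar is a sextuple $Q=(V,T,U,D,s,R)$ where $V,U$ are alphabets with $V\cap U=\emptyset$, $T\subseteq V$, $D\subseteq U$, $s\in(V-T)(U-D)$, and $R\subseteq (V\times(U-D))\times(V^*\times U)$ is finite. Let $\#\notin V\cup U$. For $u,v\in V^*\{\#\}V^*U$, write $u\Rightarrow v$ if $u=w\#arb$, $v=wa\#rzc$ with $a\in V$, $r,z,w\in V^*$, $b,c\in U$ and $(a,b,z,c)\in R$; $\Rightarrow^*$ is its reflexive-transitive closure. $L(Q)=\{v\in T^*\mid \#s\Rightarrow^* w\#vf$ for some $w\in V^*$, $f\in D\}$. A context-free grammar $G=(V,T,P,S)$ has total alphabet $V$, terminals $T\subseteq V$, nonterminals $N=V-T$, finite rules $P\subseteq N\times V^*$, start $S\in N$; $\phi(G)=\{w\in V^*\mid S\Rightarrow^*w\}$. For $X\subseteq V$, $\pi_X$ is the homomorphism from $V^*$ to $X^*$ keeping symbols of $X$ and erasing the others. For $W\subseteq V$ and $F\subseteq W^*$, $\phi(G,F)=\{x\in\phi(G)\mid\pi_W(x)\in F\}$ and $L(G,F)=\{\pi_T(y)\mid y\in\phi(G,F),\ \pi_{N-W}(y)=\varepsilon\}$. $w^R$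 denotes the reversal of $w$. *)

From Stdlib Require Import Relations.
From mathcomp Require Import all_boot.
Set Implicit Arguments. Unset Strict Implicit. Unset Printing Implicit Defensive.

(* Q = (V, T, U, D, s, R): V and U are given as two finite types (hence
   disjoint); T : {set V}, D : {set U}; s = s0 s1 with s0 : V, s1 : U;
   R a finite list of rules (a, b, z, c) : V * U * seq V * U.
   A configuration  w # x b  is represented by the triple (w, x, b). *)

Section Queue.
Variables (V U : finType).

Definition qconf := (seq V * seq V * U)%type.

Inductive qstep (R : seq (V * U * seq V * U)) : qconf -> qconf -> Prop :=
| QStep (w r z : seq V) (a : V) (b c : U) :
    (a, b, z, c) \in R -> qstep R (w, a :: r, b) (w ++ [:: a], r ++ z, c).

Definition qlang (T : {set V}) (D : {set U}) (s0 : V) (s1 : U)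
  (R : seq (V * U * seq V * U)) (v : seq V) : Prop :=
  all (fun x => x \in T) v /\
  exists (w : seq V) (f : U), f \in D /\
    clos_refl_trans _ (qstep R) ([::], [:: s0], s1) (w, v, f).
End Queue.

(* A CFG G = (Vbar, T, P, S) with terminal alphabet Tm and nonterminal
   alphabet Nt; total alphabet Vbar = Tm + Nt (inl = terminals). *)
Section CFG.
Variables (Tm Nt : finType).
Definition gsym := (Tm + Nt)%type.

Inductive cstep (P : seq (Nt * seq gsym)) : seq gsym -> seq gsym -> Prop :=
| CStep (x1 x2 rhs : seq gsym) (A : Nt) :
    (A, rhs) \in P -> cstep P (x1 ++ inr A :: x2) (x1 ++ rhs ++ x2).

Definition sentential (P : seq (Nt * seq gsym)) (S : Nt) (y : seq gsym) : Prop :=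
  clos_refl_trans _ (cstep P) [:: inr S] y.

Definition is_nonterm (a : gsym) : bool := if a is inr _ then true else false.

Definition piT (y : seq gsym) : seq Tm :=
  pmap (fun a => if a is inl t then Some t else None) y.

Definition piX (X : seq gsym) (y : seq gsym) : seq gsym :=
  filter (fun a => a \in X) y.

Definition inF (zero one hash : gsym) (u : seq gsym) : Prop :=
  exists w : seq bool,
    let w' := map (fun b : bool => if b then one else zero) w in
    u = w' ++ hash :: rev w'.

Definition cflangF (P : seq (Nt * seq gsym)) (S : Nt) (zero one hash : gsym)
  (v : seq Tm) : Prop :=
  exists y : seq gsym,
    [/\ sentential P S y,
        inF zero one hash (piX [:: zero; one; hash] y),
        [seq a <- y | is_nonterm a && (a \notin [:: zero; one; hash])] = [::]
      & v = piT y].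
End CFG.

Definition termT (V : finType) (T : {set V}) : finType := {x : V | x \in T}.

From Stdlib Require Import Relations.
From mathcomp Require Import all_boot zify.
Set Implicit Arguments. Unset Strict Implicit. Unset Printing Implicit Defensive.

(* The grammar keeps a single active nonterminal, carrying the state of Q, between
   a left part that records everything Q appends to its queue and a right part that
   records, reversed, everything Q reads.  Queue symbols are recorded in a binary
   prefix code over the nonterminals 0 and 1, except the suffix still in the queue at
   the end, which is written with terminals after a switch from a coding phase to a
   terminal phase.  The final nonterminal # then remains, and membership in
   F = {w#w^R} says exactly that the coded read word equals the coded written word.
   That every symbol is written before it is read is not enforced by the grammar: it
   follows from this final equality, because each coding step also writes a blank
   marker, so that while coding the written part stays strictly ahead of the read part.
   Conversely, a run of Q is simulated step by step, switching phase at the step that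
   appends the first symbol left in the final queue. *)

Lemma cat_prefix (X : Type) (p1 u1 p2 u2 : seq X) :
  p1 ++ u1 = p2 ++ u2 -> size p1 <= size p2 -> exists u, p2 = p1 ++ u.
Proof.
move=> E le_p12; exists (drop (size p1) p2).
have := congr1 (take (size p1)) E.
by rewrite take_size_cat // takel_cat // => {1}->; rewrite cat_take_drop.
Qed.

Lemma cat_cons_pivot (X : Type) (p : pred X) (a b c d : seq X) (x y : X) :
  p x -> ~~ has p c -> ~~ has p d -> a ++ x :: b = c ++ y :: d -> [/\ a = c, x = y & b = d].
Proof.
move=> px; elim: a c => [|h a IH] [|h' c] /=.
- by move=> _ _ [-> ->].
- by move=> /norP[+ _] _ [Eh _]; rewrite -Eh px.
- by move=> _ /negP nd [_ Ed]; case: nd; rewrite -Ed has_cat /= px orbT.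
- by move=> /norP[_ nc] nd [-> /IH[]// -> -> ->].
Qed.

Lemma map_inl_inr_inj (X Y : Type) (A A' : seq X) (B B' : seq Y) :
  map inl A ++ map inr B = map inl A' ++ map inr B' :> seq (X + Y) -> A = A' /\ B = B'.
Proof.
have inr_inj : injective (@inr X Y) by move=> ? ? [].
elim: A A' => [|x A IH] [|x' A'] /=; first by move/(inj_map inr_inj).
- by case: B.
- by clear IH; case: B'.
- by case=> -> /IH[-> ->].
Qed.

Lemma pmap_id_Some (X : Type) (s : seq X) : pmap id (map Some s) = s.
Proof. exact: map_pK. Qed.

Lemma pmap_id_nseq_None (X : Type) m : pmap id (nseq m (@None X)) = [::].
Proof. by elim: m. Qed.

Lemma pmap_id_nil (X : Type) (s : seq (option X)) : pmap id s = [::] -> s = nseq (size s) None.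
Proof. by elim: s => //= [[x|] s IH] //= /IH <-. Qed.

Lemma pmap_id_cons (X : Type) (s : seq (option X)) x p :
  pmap id s = x :: p -> exists m s', s = nseq m None ++ Some x :: s' /\ pmap id s' = p.
Proof.
elim: s => //= [[y|] s IH] /=.
- by case=> -> <-; exists 0, s.
- by case/IH => m [s' [-> E]]; exists m.+1, s'.
Qed.

Definition ucode (n : nat) : seq bool := rcons (nseq n true) false.

Lemma flatten_ucode_inj : injective (fun s => flatten (map ucode s)).
Proof.
have ucodeE n r : ucode n ++ r = nseq n true ++ false :: r by rewrite /ucode -cats1 -catA.
have ucode_cat_inj i j r1 r2 :
    nseq i true ++ false :: r1 = nseq j true ++ false :: r2 -> i = j /\ r1 = r2.
  by elim: i j => [|i IH] [|j] //= [] // /IH[-> ->].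
elim=> [|i s IH] [|j s'] //=; rewrite ?ucodeE; first 1 [by case: j | by case: i].
by case/ucode_cat_inj => -> /IH ->.
Qed.

Definition ucodes (X : countType) (s : seq X) : seq bool := flatten (map ucode (map pickle s)).

Lemma ucodes_inj (X : countType) : injective (@ucodes X).
Proof. by move=> s s' /flatten_ucode_inj /(inj_map (pcan_inj (@pickleK X))). Qed.

Lemma ucodes_cat (X : countType) (s t : seq X) : ucodes (s ++ t) = ucodes s ++ ucodes t.
Proof. by rewrite /ucodes !map_cat flatten_cat. Qed.

Section QueueRuns.
Variables (V U : finType) (R : seq (V * U * seq V * U)).
Local Notation qrun := (clos_refl_trans_1n _ (qstep R)).

Lemma qstepP w x b w' x' c : qstep R (w, x, b) (w', x', c) ->
  exists a r z, [/\ (a, b, z, c) \in R, x = a :: r, w' = w ++ [:: a] & x' = r ++ z].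
Proof. by move=> st; inversion st; subst; exists a, r, z. Qed.

Lemma qrun_size K K' : qrun K K' -> size K.1.1 <= size K'.1.1.
Proof.
elim=> // K1 K2 K3 [w r z a b c _] _ /=; rewrite size_cat addn1.
exact: leq_trans.
Qed.

Lemma qrun_empty_queue w b K : qrun (w, [::], b) K -> K = (w, [::], b).
Proof. by case=> // K1 K2 st; inversion st. Qed.

Lemma qrun_refl_or_read K K' : qrun K K' -> K' = K \/ size K.1.1 < size K'.1.1.
Proof.
case=> [|K1 K2 [w r z a b c _] run]; [by left | right].
by apply: leq_trans (qrun_size run); rewrite /= size_cat addn1.
Qed.

End QueueRuns.

Section Construction.
Variables (V U : finType) (T : {set V}) (D : {set U}) (s0 : V) (s1 : U)
  (R : seq (V * U * seq V * U)).

Local Notation Tm := (termT T).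
Local Notation qrun := (clos_refl_trans_1n _ (qstep R)).
Local Notation qreach := (clos_refl_trans _ (qstep R) ([::], [:: s0], s1)).

Definition Nt : finType := (bool * U + option (option bool))%type.
Local Notation gs := (gsym Tm Nt).

Definition Ncode (b : U) : Nt := inl (false, b).
Definition Nterm (b : U) : Nt := inl (true, b).
Definition Nstart : Nt := inr None.
Definition Nhash : Nt := inr (Some None).
Definition bit (x : bool) : gs := inr (inr (Some (Some x))).
Definition hash : gs := inr Nhash.

(* [inl (Some a)] is the queue symbol [a] written in code, [inl None] a blank
   marker, and [inr t] a terminal written as itself. *)
Definition item := (option V + Tm)%type.

Definition enc (it : item) : seq gs :=
  match it with inl o => map bit (ucode (pickle o)) | inr t => [:: inl t] end.

(* [(wr, N, rd)]: the items written so far, the active nonterminal, and the queue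
   symbols and blank markers read so far. *)
Definition gconf := (seq item * Nt * seq (option V))%type.

Definition sform (c : gconf) : seq gs :=
  let '(wr, N, rd) := c in flatten (map enc wr) ++ inr N :: rev (map bit (ucodes rd)).

Definition term_of (z : seq V) : option (seq Tm) :=
  if all (fun x => x \in T) z then Some (pmap insub z) else None.

Lemma term_ofP z t : (term_of z == Some t) = (map val t == z).
Proof.
rewrite /term_of; case: ifPn => [zT|zNT].
  apply/eqP/eqP => [[<-]|<-]; last by rewrite map_pK //; apply: valK.
  rewrite pmap_filter; last exact: insubK.
  by apply/all_filterP; apply: sub_all zT => x xT; rewrite insubT.
apply/esym/negbTE; apply: contra zNT => /eqP <-.
by apply/allP => _ /mapP[x _ ->]; exact: valP.
Qed.

Lemma exists_term z : all (fun x => x \in T) z -> exists t : seq Tm, map val t = z.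
Proof. by move=> zT; exists (pmap insub z); apply/eqP; rewrite -term_ofP /term_of zT. Qed.

Inductive grule : Nt -> seq item -> Nt -> seq (option V) -> Prop :=
| GStart : grule Nstart [:: inl (Some s0)] (Ncode s1) [::]
| GCode a b z c : (a, b, z, c) \in R ->
    grule (Ncode b) (map inl (rcons (map Some z) None)) (Ncode c) [:: Some a]
| GSwitch a b z c i t : (a, b, z, c) \in R -> i <= size z -> map val t = drop i z ->
    grule (Ncode b) (map inl (map Some (take i z)) ++ map inr t) (Nterm c) [:: Some a]
| GTerm a b z c t : (a, b, z, c) \in R -> map val t = z ->
    grule (Nterm b) (map inr t) (Nterm c) [:: Some a]
| GCodeMark b : grule (Ncode b) [:: inl None] (Ncode b) [:: None]
| GTermMark b : grule (Nterm b) [::] (Nterm b) [:: None]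
| GFinal f : f \in D -> grule (Nterm f) [::] Nhash [::].

Definition grules_of (r : V * U * seq V * U) : seq (Nt * seq item * Nt * seq (option V)) :=
  let '(a, b, z, c) := r in
  [:: (Ncode b, map inl (rcons (map Some z) None), Ncode c, [:: Some a])]
  ++ [seq (Ncode b, map inl (map Some (take i z)) ++ map inr t, Nterm c, [:: Some a])
       | i <- iota 0 (size z).+1, t <- seq_of_opt (term_of (drop i z))]
  ++ [seq (Nterm b, map inr t, Nterm c, [:: Some a]) | t <- seq_of_opt (term_of z)].

Definition grules : seq (Nt * seq item * Nt * seq (option V)) :=
  (Nstart, [:: inl (Some s0)], Ncode s1, [::])
  :: flatten (map grules_of R)
  ++ flatten [seq [:: (Ncode b, [:: inl None], Ncode b, [:: None]);
                      (Nterm b, [::], Nterm b, [:: None])] | b <- enum U]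
  ++ [seq (Nterm f, [::], Nhash, [::]) | f <- enum D].

Lemma mem_seq_of_term_of z t : (t \in seq_of_opt (term_of z)) = (map val t == z).
Proof. by rewrite -term_ofP; case: (term_of z) => [t'|] //; rewrite inE eq_sym. Qed.

Lemma grulesP N its N' os : reflect (grule N its N' os) ((N, its, N', os) \in grules).
Proof.
have rule_in r x : r \in R -> x \in grules_of r -> x \in grules.
  by move=> Rr xr; rewrite in_cons mem_cat; apply/or3P/Or32/flatten_mapP; exists r.
have mark_in b x : x \in [:: (Ncode b, [:: inl None], Ncode b, [:: None]);
                             (Nterm b, [::], Nterm b, [:: None])] -> x \in grules.
  move=> xb; rewrite in_cons !mem_cat; apply/or4P/Or43/flatten_mapP.
  by exists b; rewrite ?mem_enum.
apply: (iffP idP).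
- rewrite in_cons !mem_cat => /or4P[/eqP[-> -> -> ->]| | |]; first exact: GStart.
  + case/flatten_mapP=> [[[[a b] z] c] Rr]; rewrite in_cons mem_cat.
    case/or3P=> [/eqP[-> -> -> ->]|/allpairsPdep[i [t [+ + [-> -> -> ->]]]]|].
    * exact: GCode.
    * by rewrite mem_iota mem_seq_of_term_of => /andP[_ ?] /eqP; apply: GSwitch.
    * by case/mapP=> t; rewrite mem_seq_of_term_of => /eqP Et [-> -> -> ->]; exact: GTerm Rr Et.
  + by case/flatten_mapP=> b _; rewrite !inE => /orP[] /eqP[-> -> -> ->]; constructor.
  + by case/mapP=> f; rewrite mem_enum => Df [-> -> -> ->]; apply: GFinal.
- case=> [|a b z c Rr|a b z c i t Rr le_iz Et|a b z c t Rr Et|b|b|f Df].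
  + by rewrite in_cons eqxx.
  + by apply: rule_in Rr _; rewrite /= in_cons eqxx.
  + apply: rule_in Rr _; rewrite /grules_of in_cons mem_cat; apply/or3P/Or32/flatten_mapP.
    exists i; first by rewrite mem_iota ltnS.
    by apply/mapP; exists t; rewrite ?mem_seq_of_term_of ?Et.
  + apply: rule_in Rr _; rewrite /grules_of in_cons mem_cat; apply/or3P/Or33/mapP.
    by exists t; rewrite ?mem_seq_of_term_of ?Et.
  + by apply: (mark_in b); rewrite in_cons eqxx.
  + by apply: (mark_in b); rewrite !inE eqxx orbT.
  + rewrite in_cons !mem_cat; apply/or4P/Or44/mapP.
    by exists f; rewrite ?mem_enum.
Qed.

Definition prods : seq (Nt * seq gs) :=
  [seq (r.1.1.1, sform (r.1.1.2, r.1.2, r.2)) | r <- grules].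

Lemma prodsP A rhs : (A, rhs) \in prods ->
  exists its N' os, grule A its N' os /\ rhs = sform (its, N', os).
Proof. by case/mapP=> [[[[N its] N'] os] /grulesP rule [-> ->]]; exists its, N', os. Qed.

Lemma grule_prods N its N' os : grule N its N' os -> (N, sform (its, N', os)) \in prods.
Proof. by move/grulesP => rule; apply/mapP; exists (N, its, N', os). Qed.

Inductive gstep : gconf -> gconf -> Prop :=
  GStep wr N its N' os rd : grule N its N' os -> gstep (wr, N, rd) (wr ++ its, N', rd ++ os).

Local Notation gstar := (clos_refl_trans _ gstep).
Definition ginit : gconf := ([::], Nstart, [::]).
Local Notation greach := (gstar ginit).

Lemma gstep_star wr N its N' os rd :
  grule N its N' os -> gstar (wr, N, rd) (wr ++ its, N', rd ++ os).
Proof. by move=> rule; apply/rt_step/GStep. Qed.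

Lemma sform_cat wr its N' os rd : sform (wr ++ its, N', rd ++ os) =
  flatten (map enc wr) ++ sform (its, N', os) ++ rev (map bit (ucodes rd)).
Proof. by rewrite /= map_cat flatten_cat ucodes_cat map_cat rev_cat -!catA. Qed.

Lemma gstep_cstep k k' : gstep k k' -> cstep prods (sform k) (sform k').
Proof. by case=> wr N its N' os rd /grule_prods; rewrite sform_cat; apply: CStep. Qed.

Lemma gstar_sentential k k' :
  gstar k k' -> clos_refl_trans _ (cstep prods) (sform k) (sform k').
Proof.
elim=> [? ? /gstep_cstep|?|? ? ? _ ? _]; [exact: rt_step | exact: rt_refl | exact: rt_trans].
Qed.

Definition active (X : gs) : bool :=
  match X with inr (inl _) | inr (inr None) => true | _ => false end.

Lemma grule_active N its N' os : grule N its N' os -> active (inr N).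
Proof. by case. Qed.

Lemma bits_inactive l : ~~ has active (map bit l).
Proof. by elim: l. Qed.

Lemma enc_inactive wr : ~~ has active (flatten (map enc wr)).
Proof.
elim: wr => //= -[o|t] wr IH; rewrite has_cat negb_or IH andbT //.
exact: bits_inactive.
Qed.

Lemma sentential_greach y : sentential prods Nstart y -> exists2 k, greach k & y = sform k.
Proof.
move/clos_rt_rtn1_iff; elim=> [|y1 y2 [x1 x2 rhs A]]; first by exists ginit; first exact: rt_refl.
case/prodsP=> its [N' [os [rule ->]]] _ [[[wr N] rd] reach_k E].
have rd_inactive : ~~ has active (rev (map bit (ucodes rd))) by rewrite has_rev bits_inactive.
have [E1 [EA] E2] := cat_cons_pivot (grule_active rule) (enc_inactive wr) rd_inactive E.
subst x1 x2 A; exists (wr ++ its, N', rd ++ os); last by rewrite sform_cat.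
exact: rt_trans reach_k (gstep_star _ _ rule).
Qed.

Definition shape (c : gconf) : Prop :=
  let '(wr, N, rd) := c in
  match N with
  | inl (false, _) => exists A, wr = map inl A /\ size rd < size A
  | inl (true, _) | inr (Some None) => exists A B, wr = map inl A ++ map inr B
  | inr None => wr = [::] /\ rd = [::]
  | inr (Some (Some _)) => False
  end.

Lemma greach_shape k : greach k -> shape k.
Proof.
move/clos_rt_rtn1_iff; elim=> [|y y2 [wr N its N' os rd rule] _]; first by [].
case: rule => [|a b z c Rr|a b z c i t Rr _ _|a b z c t Rr _|b|b|f Df] /=.
- by case=> -> ->; exists [:: Some s0].
- case=> A [-> lt_rdA]; exists (A ++ rcons (map Some z) None); rewrite map_cat.
  by rewrite !size_cat size_rcons /=; split=> //; lia.
- by case=> A [-> _]; exists (A ++ map Some (take i z)), t; rewrite map_cat catA.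
- by case=> A [B ->]; exists A, (B ++ t); rewrite map_cat catA.
- by case=> A [-> lt_rdA]; exists (A ++ [:: None]); rewrite map_cat !size_cat ltn_add2r.
- by case=> A [B ->]; exists A, B; rewrite cats0.
- by case=> A [B ->]; exists A, B; rewrite cats0.
Qed.

Definition tape_sym (it : item) : option V :=
  match it with inl o => o | inr t => Some (val t) end.

Lemma tape_inl A : map tape_sym (map inl A) = A.
Proof. by elim: A => //= o A ->. Qed.

Lemma tape_inr B : map tape_sym (map inr B) = map Some (map val B).
Proof. by elim: B => //= t B ->. Qed.

Definition qconf_of (wr : seq item) (rd : seq (option V)) (b : U) : qconf V U :=
  (pmap id rd, pmap id (drop (size rd) (map tape_sym wr)), b).

Lemma qconf_of_final A B f : qconf_of (map inl A ++ map inr B) A f = (pmap id A, map val B, f).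
Proof. by rewrite /qconf_of map_cat tape_inl tape_inr drop_size_cat // pmap_id_Some. Qed.

Lemma qreach_read wr its rd u a b z c :
  map tape_sym wr = rd ++ Some a :: u -> (a, b, z, c) \in R ->
  pmap id (map tape_sym its) = z ->
  qreach (qconf_of wr rd b) -> qreach (qconf_of (wr ++ its) (rd ++ [:: Some a]) c).
Proof.
move=> Ewr Rr Ez reach; apply: rt_trans reach (rt_step _ _ _ _ _).
rewrite /qconf_of map_cat Ewr.
have -> : (rd ++ Some a :: u) ++ map tape_sym its = (rd ++ [:: Some a]) ++ u ++ map tape_sym its.
  by rewrite -!catA.
by rewrite !drop_size_cat // !pmap_cat Ez /=; apply: QStep.
Qed.

Lemma qconf_of_mark wr its rd u b :
  map tape_sym wr = rd ++ None :: u -> pmap id (map tape_sym its) = [::] ->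
  qconf_of (wr ++ its) (rd ++ [:: None]) b = qconf_of wr rd b.
Proof.
move=> Ewr Eits; rewrite /qconf_of map_cat Ewr.
have -> : (rd ++ None :: u) ++ map tape_sym its = (rd ++ [:: None]) ++ u ++ map tape_sym its.
  by rewrite -!catA.
by rewrite !drop_size_cat // !pmap_cat Eits /= !cats0.
Qed.

Definition sound (c : gconf) : Prop :=
  let '(wr, N, rd) := c in
  match N with
  | inl (_, b) => qreach (qconf_of wr rd b)
  | inr (Some None) => exists2 f, f \in D & qreach (qconf_of wr rd f)
  | _ => True
  end.

Definition gfinal (A : seq (option V)) (B : seq Tm) : gconf := (map inl A ++ map inr B, Nhash, A).

Lemma gstar_grow k k' : gstar k k' -> exists u v, k'.1.1 = k.1.1 ++ u /\ k'.2 = k.2 ++ v.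
Proof.
elim=> [_ _ [wr N its N' os rd _]|k0|k1 k2 k3 _ [u1 [v1 [E1 F1]]] _ [u2 [v2 [E2 F2]]]].
- by exists its, os.
- by exists [::], [::]; rewrite !cats0.
- by exists (u1 ++ u2), (v1 ++ v2); rewrite E2 F2 E1 F1 !catA.
Qed.

Definition term_phase (N : Nt) : bool :=
  match N with inl (true, _) | inr (Some None) => true | _ => false end.

Lemma gstar_term_phase k k' : gstar k k' -> term_phase k.1.2 ->
  term_phase k'.1.2 /\ exists B, k'.1.1 = k.1.1 ++ map inr B.
Proof.
elim=> [_ _ [wr N its N' os rd rule]|k0|k1 k2 k3 _ IH1 _ IH2].
- case: rule => [|a b z c _|a b z c i t _ _ _|a b z c t _ _|b|b|f _] //= _.
  + by split=> //; exists t.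
  + by split=> //; exists [::].
  + by split=> //; exists [::].
- by split=> //; exists [::]; rewrite cats0.
- move=> /IH1[/IH2[ph3 [B2 E2]] [B1 E1]]; split=> //.
  by exists (B1 ++ B2); rewrite E2 E1 map_cat catA.
Qed.

Lemma gstar_final_read wr b rd A' B' A B : gstar (wr, Nterm b, rd) (gfinal A B) ->
  wr = map inl A' ++ map inr B' -> size rd <= size A'.
Proof.
move=> fin Ewr; have [_ [B'' /= E]] := gstar_term_phase fin erefl.
have [_ [v [_ /= EA]]] := gstar_grow fin.
rewrite Ewr -catA -map_cat in E; have [<- _] := map_inl_inr_inj E.
by rewrite EA size_cat leq_addr.
Qed.

Lemma gstar_final_written wr its N' rd o A B :
  gstar (wr ++ its, N', rd ++ [:: o]) (gfinal A B) -> size (rd ++ [:: o]) <= size wr ->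
  exists u, map tape_sym wr = rd ++ o :: u.
Proof.
case/gstar_grow=> u [v [/= Ewr EA]] le_rd_wr.
have := congr1 (map tape_sym) Ewr; rewrite !map_cat tape_inl EA -!catA catA => E.
have [|u' ->] := cat_prefix E; first by rewrite size_map.
by exists u'; rewrite -catA.
Qed.

Lemma sound_step k k' A B :
  greach k -> gstep k k' -> gstar k' (gfinal A B) -> sound k -> sound k'.
Proof.
move=> reach_k st; case: st reach_k => wr N its N' os rd rule /greach_shape + fin.
case: rule fin => [|a b z c Rr|a b z c i t Rr _ Et|a b z c t Rr Et|b|b|f Df] fin /=.
- by case=> -> -> _; exact: rt_refl.
- case=> A' [Ewr lt_rdA'] reach.
  have [|u Eu] := gstar_final_written fin; first by rewrite Ewr size_cat size_map addn1.
  apply: qreach_read Eu Rr _ reach.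
  by rewrite tape_inl -cats1 pmap_cat pmap_id_Some cats0.
- case=> A' [Ewr lt_rdA'] reach.
  have [|u Eu] := gstar_final_written fin; first by rewrite Ewr size_cat size_map addn1.
  apply: qreach_read Eu Rr _ reach.
  by rewrite map_cat tape_inl tape_inr pmap_cat !pmap_id_Some Et cat_take_drop.
- case=> A' [B' Ewr] reach.
  have le_rdA' : size (rd ++ [:: Some a]) <= size A'.
    by apply: (gstar_final_read (B' := B' ++ t) fin); rewrite Ewr map_cat catA.
  have [|u Eu] := gstar_final_written fin.
    by apply: leq_trans le_rdA' _; rewrite Ewr size_cat size_map leq_addr.
  apply: qreach_read Eu Rr _ reach.
  by rewrite tape_inr pmap_id_Some Et.
- case=> A' [Ewr lt_rdA'] reach.
  have [|u Eu] := gstar_final_written fin; first by rewrite Ewr size_cat size_map addn1.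
  by rewrite (qconf_of_mark _ Eu).
- case=> A' [B' Ewr] reach.
  have le_rdA' : size (rd ++ [:: None]) <= size A'.
    by apply: (gstar_final_read (B' := B') fin); rewrite Ewr cats0.
  have [|u Eu] := gstar_final_written fin.
    by apply: leq_trans le_rdA' _; rewrite Ewr size_cat size_map leq_addr.
  by rewrite (qconf_of_mark _ Eu).
- by move=> _ reach; exists f; rewrite ?cats0.
Qed.

Lemma greach_sound k A B : greach k -> gstar k (gfinal A B) -> sound k.
Proof.
move/clos_rt_rtn1_iff; elim=> [_|k1 k2 st reach_k1 IH fin] //.
have greach_k1 : greach k1 by apply/clos_rt_rtn1_iff.
have fin1 : gstar k1 (gfinal A B) by apply: rt_trans fin; exact: rt_step.
exact: sound_step greach_k1 st fin (IH fin1).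
Qed.

Lemma enc_inl A : flatten (map enc (map inl A)) = map bit (ucodes A).
Proof. by elim: A => //= o A ->; rewrite /ucodes /= map_cat. Qed.

Lemma enc_inr B : flatten (map enc (map inr B)) = map inl B.
Proof. by elim: B => //= t B ->. Qed.

Lemma sform_final A B rd : sform (map inl A ++ map inr B, Nhash, rd) =
  map bit (ucodes A) ++ map inl B ++ hash :: map bit (rev (ucodes rd)).
Proof. by rewrite /= map_cat flatten_cat enc_inl enc_inr map_rev -catA. Qed.

Local Notation W := [:: bit false; bit true; hash].

Lemma piX_final A B rd : piX W (sform (map inl A ++ map inr B, Nhash, rd)) =
  map bit (ucodes A) ++ hash :: map bit (rev (ucodes rd)).
Proof.
have bitsW l : [seq X <- map bit l | X \in W] = map bit l by elim: l => //= -[] l ->.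
have termsW : [seq X <- map inl B | X \in W] = [::] by elim: B.
by rewrite sform_final /piX !filter_cat termsW bitsW /= bitsW.
Qed.

Lemma piT_final A B rd : piT (sform (map inl A ++ map inr B, Nhash, rd)) = B.
Proof.
have bitsT l : pmap (fun X => if X is inl t then Some t else None) (map bit l) = [::].
  by elim: l.
rewrite sform_final /piT !pmap_cat bitsT /= bitsT cats0.
by elim: B => //= t B ->.
Qed.

Lemma foreign_final A B rd :
  [seq X <- sform (map inl A ++ map inr B, Nhash, rd) | is_nonterm X && (X \notin W)] = [::].
Proof.
have bitsF l : [seq X <- map bit l | is_nonterm X && (X \notin W)] = [::] by elim: l => //= -[].
by rewrite sform_final !filter_cat bitsF /= bitsF; elim: B.
Qed.

Lemma inF_final (A rd : seq (option V)) :
  inF (bit false) (bit true) hash (map bit (ucodes A) ++ hash :: map bit (rev (ucodes rd))) <->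
  rd = A.
Proof.
have bit_inj : injective bit by move=> ? ? [].
have no_hash l : ~~ has (pred1 hash) (map bit l) by elim: l.
have bitE w : map (fun x : bool => if x then bit true else bit false) w = map bit w.
  by apply: eq_map => -[].
split=> [[w /=]|->]; last by exists (ucodes A); rewrite /= bitE map_rev.
rewrite bitE -map_rev => /(cat_cons_pivot (p := pred1 hash) (eqxx hash) (no_hash _) (no_hash _)).
case=> /(inj_map bit_inj) EA _ /(inj_map bit_inj)/(inv_inj (@revK _)) Erd.
by apply: ucodes_inj; rewrite EA Erd.
Qed.

Lemma greach_final k : greach k ->
  [seq X <- sform k | is_nonterm X && (X \notin W)] = [::] ->
  exists A B rd, k = (map inl A ++ map inr B, Nhash, rd).
Proof.
case: k => [[wr N] rd] /greach_shape sh nf.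
have N_in : inr N \in sform (wr, N, rd) by rewrite mem_cat mem_head orbT.
have := mem_filter (fun X => is_nonterm X && (X \notin W)) (inr N) (sform (wr, N, rd)).
rewrite nf N_in andbT /=; clear nf N_in.
by case: N sh => [[[] b]|[[[]|]|]] //= [A [B ->]] _; exists A, B, rd.
Qed.

Lemma cflang_qlang vt :
  cflangF prods Nstart (bit false) (bit true) hash vt -> qlang T D s0 s1 R (map val vt).
Proof.
case=> y [/sentential_greach[k reach_k ->] + /(greach_final reach_k) [A [B [rd Ek]]] ->].
subst k; rewrite piX_final => /inF_final Erd; subst rd.
have [f Df] := greach_sound reach_k (rt_refl _ _ (gfinal A B)).
rewrite qconf_of_final piT_final => reach.
split; first by apply/allP => _ /mapP[t _ ->]; exact: valP.
by exists (pmap id A), f.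
Qed.

Lemma gstar_code_marks A b rd m :
  gstar (map inl A, Ncode b, rd) (map inl (A ++ nseq m None), Ncode b, rd ++ nseq m None).
Proof.
elim: m A rd => [|m IH] A rd; first by rewrite !cats0; exact: rt_refl.
apply: rt_trans (gstep_star _ _ (GCodeMark b)) _.
have catS s : s ++ nseq m.+1 None = (s ++ [:: None]) ++ nseq m None by rewrite -catA.
have -> : map inl A ++ [:: inl None] = map inl (A ++ [:: None]) :> seq item by rewrite map_cat.
by rewrite !catS; apply: IH.
Qed.

Lemma gstar_term_marks wr b rd m : gstar (wr, Nterm b, rd) (wr, Nterm b, rd ++ nseq m None).
Proof.
elim: m rd => [|m IH] rd; first by rewrite cats0; exact: rt_refl.
apply: rt_trans (gstep_star wr rd (GTermMark b)) _.
have -> : rd ++ nseq m.+1 None = (rd ++ [:: None]) ++ nseq m None by rewrite -catA.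
by rewrite cats0; apply: IH.
Qed.

Lemma term_phase_sim w p q b wf xf f : qrun (w, p ++ q, b) (wf, xf, f) ->
  size wf = size w + size p -> all (fun x => x \in T) xf ->
  exists2 B, xf = q ++ map val B & forall wr rd rd', pmap id rd' = p ->
    gstar (wr, Nterm b, rd) (wr ++ map inr B, Nterm f, rd ++ rd').
Proof.
move eK: (w, p ++ q, b) => K; move eK': (wf, xf, f) => K' run.
elim: run w p q b eK eK' => [K0|K0 [[w1 x1] c] K2 st run IH] w p q b eK eK'; subst.
  case: eK' => -> -> -> /eqP; rewrite -{1}[size w]addn0 eqn_add2l eq_sym => /eqP/size0nil -> _.
  exists [::]; first by rewrite cats0.
  move=> wr rd rd' /pmap_id_nil ->; rewrite cats0; exact: gstar_term_marks.
case/qstepP: st => a [r [z [Rr Epq Ew1 Ex1]]]; subst w1 x1.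
case: p Epq => [|a' p] Epq Ewf xfT.
  by move: (qrun_size run) => /=; rewrite Ewf size_cat addn0 addn1 ltnn.
case: Epq => Ea Er; subst a' r.
have Ewf' : size wf = size (w ++ [:: a]) + size p by rewrite Ewf size_cat /= addn1 addnS.
rewrite -catA in IH; have [B0 Exf derivB0] := IH _ _ _ _ erefl erefl Ewf' xfT.
have [t Et] : exists t : seq Tm, map val t = z.
  by apply: exists_term; move: xfT; rewrite Exf !all_cat => /andP[/andP[]].
exists (t ++ B0); first by rewrite Exf map_cat Et catA.
move=> wr rd rd0 Erd0; have [m [rd' [-> Erd']]] := pmap_id_cons Erd0.
apply: rt_trans (gstar_term_marks wr b rd m) _.
apply: rt_trans (gstep_star _ _ (GTerm Rr Et)) _.
move: (derivB0 (wr ++ map inr t) ((rd ++ nseq m None) ++ [:: Some a]) rd' Erd').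
by rewrite map_cat -!catA.
Qed.

Lemma code_phase_switch w a r z b c wf xf f : (a, b, z, c) \in R ->
  qrun (w ++ [:: a], r ++ z, c) (wf, xf, f) -> all (fun x => x \in T) xf ->
  size (w ++ [:: a]) + size r <= size wf <= size (w ++ [:: a]) + size (r ++ z) ->
  forall rd rd', pmap id rd' = r ->
  exists A B, gstar (map inl (rd ++ Some a :: rd'), Ncode b, rd)
                    (map inl A ++ map inr B, Nterm f, A) /\ xf = map val B.
Proof.
move=> Rr run xfT /andP[le_wf le_wf'] rd rd' Erd'.
set i := size wf - size (w ++ [:: a]) - size r.
have le_iz : i <= size z by move: le_wf'; rewrite [size (r ++ z)]size_cat /i; lia.
have Ewf : size wf = size (w ++ [:: a]) + size (r ++ take i z).
  by rewrite [size (r ++ _)]size_cat size_takel // /i; lia.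
rewrite -(cat_take_drop i z) catA in run.
have [B0 Exf derivB0] := term_phase_sim run Ewf xfT.
have [t Et] : exists t : seq Tm, map val t = drop i z.
  by apply: exists_term; move: xfT; rewrite Exf all_cat => /andP[].
exists ((rd ++ Some a :: rd') ++ map Some (take i z)), (t ++ B0).
split; last by rewrite Exf map_cat Et.
apply: rt_trans (gstep_star _ _ (GSwitch Rr le_iz Et)) _.
have Erd'i : pmap id (rd' ++ map Some (take i z)) = r ++ take i z.
  by rewrite pmap_cat Erd' pmap_id_Some.
move: (derivB0 (map inl (rd ++ Some a :: rd') ++ map inl (map Some (take i z)) ++ map inr t)
  (rd ++ [:: Some a]) _ Erd'i).
by rewrite !map_cat -!catA.
Qed.

Lemma code_phase_sim w x b wf xf f rd rd' : qrun (w, x, b) (wf, xf, f) ->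
  size w + size x <= size wf -> 0 < size x -> all (fun y => y \in T) xf -> pmap id rd' = x ->
  exists A B, gstar (map inl (rd ++ rd'), Ncode b, rd)
                    (map inl A ++ map inr B, Nterm f, A) /\ xf = map val B.
Proof.
move eK: (w, x, b) => K; move eK': (wf, xf, f) => K' run.
elim: run w x b eK eK' rd rd' => [K0|K0 [[w1 x1] c] K2 st run IH] w x b eK eK' rd rd0; subst.
  case: eK' => -> _ _ le_wf x_gt0.
  by move: le_wf; rewrite -{2}[size w]addn0 leq_add2l leqNgt x_gt0.
case/qstepP: st => a [r [z [Rr Ex Ew1 Ex1]]]; subst x w1 x1 => le_wf _ xfT Erd0.
have [m [rd' [-> Erd']]] := pmap_id_cons Erd0.
have Erd'm : pmap id (rd' ++ nseq m None) = r by rewrite pmap_cat Erd' pmap_id_nseq_None cats0.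
suff [A [B [deriv Exf]]] : exists A B,
    gstar (map inl ((rd ++ nseq m None) ++ Some a :: rd' ++ nseq m None), Ncode b,
           rd ++ nseq m None)
          (map inl A ++ map inr B, Nterm f, A) /\ xf = map val B.
  exists A, B; split=> //; apply: rt_trans deriv.
  by move: (gstar_code_marks (rd ++ nseq m None ++ Some a :: rd') b rd m); rewrite -!catA.
have [lt_wf|le_wf'] := ltnP (size (w ++ [:: a]) + size (r ++ z)) (size wf); last first.
  apply: code_phase_switch Rr run xfT _ _ _ Erd'm.
  by rewrite le_wf' andbT; move: le_wf; rewrite size_cat /=; lia.
have rz_gt0 : 0 < size (r ++ z).
  case Erz: (r ++ z) run => [|? ?] // /qrun_empty_queue[Ewf _ _].
  by move: lt_wf; rewrite Erz Ewf addn0 ltnn.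
have Erd'z : pmap id ((rd' ++ nseq m None) ++ rcons (map Some z) None) = r ++ z.
  by rewrite pmap_cat Erd'm -cats1 pmap_cat pmap_id_Some cats0.
have [A [B [deriv Exf]]] :=
  IH _ _ _ erefl erefl ((rd ++ nseq m None) ++ [:: Some a]) _ (ltnW lt_wf) rz_gt0 xfT Erd'z.
exists A, B; split=> //.
apply: rt_trans (gstep_star _ _ (GCode Rr)) _.
set zs := rcons (map Some z) None.
have -> : map inl ((rd ++ nseq m None) ++ Some a :: rd' ++ nseq m None) ++ map inl zs =
    map inl (((rd ++ nseq m None) ++ [:: Some a]) ++ (rd' ++ nseq m None) ++ zs) :> seq item.
  by rewrite -map_cat -!catA /= -!catA.
exact: deriv.
Qed.

Lemma qlang_cflang v : s1 \notin D -> qlang T D s0 s1 R v ->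
  exists vt, cflangF prods Nstart (bit false) (bit true) hash vt /\ v = map val vt.
Proof.
move=> s1ND [vT [w [f [Df /clos_rt_rt1n_iff run]]]].
have [[_ _ Ef]|lt_w] := qrun_refl_or_read run; first by move: s1ND; rewrite -Ef Df.
have [A [B [deriv ->]]] := code_phase_sim (rd' := [:: Some s0]) [::] run lt_w erefl vT erefl.
exists B; split=> //; exists (sform (gfinal A B)); split.
- have fin : gstar (map inl A ++ map inr B, Nterm f, A) (gfinal A B).
    by move: (gstep_star (map inl A ++ map inr B) A (GFinal Df)); rewrite !cats0.
  apply: (gstar_sentential (k := ginit)); apply: rt_trans (gstep_star [::] [::] GStart) _.
  exact: rt_trans deriv fin.
- by rewrite piX_final; apply/inF_final.
- exact: foreign_final.
- by rewrite piT_final.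
Qed.

End Construction.

Theorem lemma4 (V U : finType) (T : {set V}) (D : {set U}) (s0 : V) (s1 : U)
  (R : seq (V * U * seq V * U))
  (Hs0 : s0 \notin T) (Hs1 : s1 \notin D)
  (HR : forall a b z c, (a, b, z, c) \in R -> b \notin D) :
  exists (Nt : finType) (P : seq (Nt * seq (gsym (termT T) Nt))) (S : Nt)
         (zero one hash : gsym (termT T) Nt),
    uniq [:: zero; one; hash] /\
    forall v : seq V,
      qlang T D s0 s1 R v <->
      exists vt : seq (termT T), cflangF P S zero one hash vt /\ v = map val vt.
Proof.
exists (Nt U), (prods T D s0 s1 R), (Nstart U), (bit U T false), (bit U T true), (hash U T).
split=> // v; split; first exact: qlang_cflang.
by case=> vt [/cflang_qlang + ->].
Qed.
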